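(* Let $A_1,A_2,B_1,B_2,C_1,C_2$ be pairwise intersecting compact convex sets in the plane (not necessarily distinct). Suppose $o(A_1A_2B_1B_2)=o(A_1A_2C_1C_2)=o(B_1B_2C_1C_2)=0$, $o(A_1B_1C_1)\ne0$ and $o(A_2B_2C_2)\ne0$. Then $o(A_1B_1C_1)=o(A_2B_2C_2)$.
   Context: For three pairwise intersecting compact convex sets $X,Y,Z$ in the plane: $o(XYZ)=0$ if $X\cap Y\cap Z\neq\emptyset$; otherwise $o(XYZ)=o(xyz)$ for any $x\in Y\cap Z$, $y\in X\cap Z$, $z\in X\cap Y$, where for points $o(xyz)=+1$ for a counterclockwise and $-1$ for a clockwise triangle (independent of the choice). For sets $X_1,\dots,X_n$, the shorthand $o(X_1\dots X_n)=0$ means $o(X_iX_jX_k)=0$ for all $i<j<k$. *)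

From Stdlib Require Import Reals Lra List ClassicalEpsilon.
Open Scope R_scope.

Definition point := (R * R)%type.
Definition pset := point -> Prop.

Definition convex (S : pset) : Prop :=
  forall p q : point, forall t : R, 0 <= t <= 1 -> S p -> S q ->
    S (fst p + t * (fst q - fst p), snd p + t * (snd q - snd p)).

Definition closed (S : pset) : Prop :=
  forall p : point, ~ S p -> exists eps, 0 < eps /\
    forall q : point, (fst q - fst p)^2 + (snd q - snd p)^2 < eps^2 -> ~ S q.

Definition bounded (S : pset) : Prop :=
  exists M, forall p : point, S p -> Rabs (fst p) <= M /\ Rabs (snd p) <= M.

(* Compact subsets of R^2 (Heine-Borel). *)
Definition compact (S : pset) : Prop := closed S /\ bounded S.

Definition compact_convex (S : pset) : Prop := compact S /\ convex S.

Definition intersect (X Y : pset) : Prop := exists p, X p /\ Y p.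

Definition pairwise_intersecting (L : list pset) : Prop :=
  forall X Y, In X L -> In Y L -> intersect X Y.

(* orientation of a point triple: +1 ccw, -1 cw, 0 collinear *)
Definition det3 (x y z : point) : R :=
  (fst y - fst x) * (snd z - snd x) - (snd y - snd x) * (fst z - fst x).

Definition orient (x y z : point) : Z :=
  match Rlt_dec 0 (det3 x y z) with
  | left _ => 1%Z
  | right _ => match Rlt_dec (det3 x y z) 0 with
               | left _ => (-1)%Z
               | right _ => 0%Z
               end
  end.

Definition witness_pts (X Y W : pset) (t : point * point * point) : Prop :=
  let '(x, y, z) := t in
  (Y x /\ W x) /\ (X y /\ W y) /\ (X z /\ Y z).

Definition point0 : point := (0, 0).

(* o(XYZ): 0 if X∩Y∩Z nonempty, otherwise o(xyz) for a (chosen)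
   x ∈ Y∩Z, y ∈ X∩Z, z ∈ X∩Y (independent of the choice, per the paper). *)
Definition o3 (X Y W : pset) : Z :=
  if excluded_middle_informative (exists p, X p /\ Y p /\ W p) then 0%Z
  else let t := epsilon (inhabits (point0, point0, point0)) (witness_pts X Y W) in
       let '(x, y, z) := t in orient x y z.

(* o(X1 X2 X3 X4) = 0 : all four triples i<j<k have o = 0 *)
Definition o4_zero (X1 X2 X3 X4 : pset) : Prop :=
  o3 X1 X2 X3 = 0%Z /\ o3 X1 X2 X4 = 0%Z /\ o3 X1 X3 X4 = 0%Z /\ o3 X2 X3 X4 = 0%Z.

(* If o(XYZ) <> 0, then X, Y, Z have no common point and o(XYZ) is the sign of
   det(x, y, z) for every choice of x in Y∩Z, y in X∩Z, z in X∩Y: a collinear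
   witness triple would put one of its points into all three sets, so the
   determinant, which is affine in each point, cannot change sign while one
   witness moves along a segment inside its (convex) intersection.
   The hypothesis o(A1A2B1B2) = 0 says that every three of A1, A2, B1, B2 meet;
   by Helly's theorem in the plane (through Radon's partition of four points)
   there is a point z in A1∩A2∩B1∩B2, and likewise y in A1∩A2∩C1∩C2 and
   x in B1∩B2∩C1∩C2.  The triple (x, y, z) witnesses both o(A1B1C1) and
   o(A2B2C2), so they are equal. *)

From Stdlib Require Import Reals List ZArith.
From Stdlib Require Import Lra Classical ClassicalEpsilon.
Open Scope R_scope.

Definition lerp (p q : point) (t : R) : point :=
  (fst p + t * (fst q - fst p), snd p + t * (snd q - snd p)).

Definition bary (a b c : R) (p q r : point) : point :=
  (a * fst p + b * fst q + c * fst r, a * snd p + b * snd q + c * snd r).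

Definition in_segment (p q u : point) : Prop :=
  exists t, 0 <= t <= 1 /\ u = lerp p q t.

Definition in_triangle (p q r u : point) : Prop :=
  exists a b c, 0 <= a /\ 0 <= b /\ 0 <= c /\ a + b + c = 1 /\ u = bary a b c p q r.

Definition segments_cross (p q r s : point) : Prop :=
  exists u, in_segment p q u /\ in_segment r s u.

Definition meet3 (X Y W : pset) : Prop := exists p, X p /\ Y p /\ W p.

Definition meet4 (S1 S2 S3 S4 : pset) : Prop :=
  exists p, S1 p /\ S2 p /\ S3 p /\ S4 p.

Lemma div_in_unit_interval a b : 0 <= a -> a <= b -> 0 < b -> 0 <= a / b <= 1.
Proof.
  intros Ha Hab Hb. assert (a / b * b = a) by (field; lra). split; nra.
Qed.

Lemma in_segment_in_triangle p q r u : in_segment p q u -> in_triangle p q r u.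
Proof.
  intros [t [Ht ->]]. exists (1 - t), t, 0. repeat split; try lra.
  apply injective_projections; simpl; ring.
Qed.

Lemma convex_segment S p q u : convex S -> S p -> S q -> in_segment p q u -> S u.
Proof. intros cS Sp Sq [t [Ht ->]]. now apply cS. Qed.

Lemma convex_triangle S p q r u :
  convex S -> S p -> S q -> S r -> in_triangle p q r u -> S u.
Proof.
  intros cS Sp Sq Sr [a [b [c [Ha [Hb [Hc [Habc ->]]]]]]].
  destruct (Req_dec (a + b) 0) as [Hab | Hab].
  - replace (bary a b c p q r) with r; [easy|].
    apply injective_projections; simpl; replace a with 0 by lra;
      replace b with 0 by lra; replace c with 1 by lra; ring.
  - replace (bary a b c p q r) with (lerp (lerp p q (b / (a + b))) r c)
      by (apply injective_projections; simpl; replace c with (1 - a - b) by lra;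
          field; lra).
    apply cS; [lra | | easy]. apply cS; [apply div_in_unit_interval; lra | easy | easy].
Qed.

Lemma det3_rot x y z : det3 x y z = det3 y z x.
Proof. unfold det3; ring. Qed.

Lemma det3_lerp_l x x' y z t :
  det3 (lerp x x' t) y z = det3 x y z + t * (det3 x' y z - det3 x y z).
Proof. unfold det3, lerp; simpl; ring. Qed.

Lemma det3_eq0_lerp x y z : det3 x y z = 0 -> x <> z -> exists t, y = lerp x z t.
Proof.
  destruct x as [x1 x2], y as [y1 y2], z as [z1 z2]; unfold det3, lerp; simpl.
  intros D Hxz.
  set (d := (z1 - x1) * (z1 - x1) + (z2 - x2) * (z2 - x2)).
  assert (Hd : 0 < d).
  { destruct (Req_dec x1 z1), (Req_dec x2 z2); subst; try congruence;
      unfold d; nra. }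
  set (dot := (y1 - x1) * (z1 - x1) + (y2 - x2) * (z2 - x2)).
  assert (E1 : (y1 - x1) * d - dot * (z1 - x1)
               = (z2 - x2) * ((y1 - x1) * (z2 - x2) - (y2 - x2) * (z1 - x1)))
    by (unfold d, dot; ring).
  assert (E2 : (y2 - x2) * d - dot * (z2 - x2)
               = (x1 - z1) * ((y1 - x1) * (z2 - x2) - (y2 - x2) * (z1 - x1)))
    by (unfold d, dot; ring).
  rewrite D, Rmult_0_r in E1, E2.
  exists (dot / d). apply injective_projections; simpl.
  - apply (Rmult_eq_reg_r d); [|lra]. field_simplify; lra.
  - apply (Rmult_eq_reg_r d); [|lra]. field_simplify; lra.
Qed.

Lemma lerp_between x z t :
  in_segment x z (lerp x z t) \/ in_segment x (lerp x z t) z \/ in_segment (lerp x z t) z x.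
Proof.
  destruct (Rlt_or_le 1 t) as [T1 | T1]; [|destruct (Rlt_or_le t 0) as [T0 | T0]].
  - right; left. exists (1 / t). split; [apply div_in_unit_interval; lra|].
    apply injective_projections; simpl; field; lra.
  - right; right. exists (- t / (1 - t)). split; [apply div_in_unit_interval; lra|].
    apply injective_projections; simpl; field; lra.
  - left. exists t. split; [lra | easy].
Qed.

Lemma collinear_between x y z :
  det3 x y z = 0 -> in_segment x z y \/ in_segment x y z \/ in_segment y z x.
Proof.
  intros D. destruct (classic (x = z)) as [-> | Hxz].
  - right; right. exists 1. split; [lra|].
    apply injective_projections; simpl; ring.
  - destruct (det3_eq0_lerp x y z D Hxz) as [t ->]. apply lerp_between.
Qed.

Lemma affine_root d d' : d * d' <= 0 -> exists t, 0 <= t <= 1 /\ d + t * (d' - d) = 0.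
Proof.
  intros H. destruct (Req_dec d d') as [<- | Hdd'].
  - exists 0. split; nra.
  - exists (d / (d - d')). split; [|field; lra].
    destruct (Rlt_or_le d' d).
    + apply div_in_unit_interval; nra.
    + replace (d / (d - d')) with (- d / (d' - d)) by (field; lra).
      apply div_in_unit_interval; nra.
Qed.

Lemma orient_rot x y z : orient x y z = orient y z x.
Proof. unfold orient. now rewrite det3_rot. Qed.

Lemma orient_neq0 x y z : det3 x y z <> 0 -> orient x y z <> 0%Z.
Proof.
  intros D. unfold orient.
  destruct (Rlt_dec 0 (det3 x y z)); [discriminate|].
  destruct (Rlt_dec (det3 x y z) 0); [discriminate | lra].
Qed.

Lemma orient_eq_of_same_sign x y z x' y' z' :
  0 < det3 x y z * det3 x' y' z' -> orient x y z = orient x' y' z'.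
Proof.
  intros H. unfold orient.
  destruct (Rlt_dec 0 (det3 x y z)), (Rlt_dec 0 (det3 x' y' z'));
    try destruct (Rlt_dec (det3 x y z) 0); try destruct (Rlt_dec (det3 x' y' z') 0);
    solve [reflexivity | exfalso; nra].
Qed.

Lemma meet3_rot X Y W : meet3 Y W X -> meet3 X Y W.
Proof. intros [p Hp]. exists p. tauto. Qed.

Section WitnessOrientation.

Variables X Y W : pset.
Hypotheses (cX : convex X) (cY : convex Y) (cW : convex W).
Hypothesis disjoint3 : ~ meet3 X Y W.

Lemma witness_det3_neq0 x y z : witness_pts X Y W (x, y, z) -> det3 x y z <> 0.
Proof.
  simpl. intros Wit D. apply disjoint3.
  destruct (collinear_between x y z D) as [S | [S | S]].
  - exists y. pose proof (convex_segment Y x z y cY). tauto.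
  - exists z. pose proof (convex_segment W x y z cW). tauto.
  - exists x. pose proof (convex_segment X y z x cX). tauto.
Qed.

Lemma witness_orient_l x x' y z :
  witness_pts X Y W (x, y, z) -> witness_pts X Y W (x', y, z) ->
  orient x y z = orient x' y z.
Proof.
  intros Wit Wit'. apply orient_eq_of_same_sign.
  destruct (Rlt_or_le 0 (det3 x y z * det3 x' y z)) as [Pos | Neg]; [easy | exfalso].
  destruct (affine_root _ _ Neg) as [t [Ht Root]].
  apply (witness_det3_neq0 (lerp x x' t) y z); [|now rewrite det3_lerp_l].
  simpl in *. split; [split; [apply cY | apply cW] |]; tauto.
Qed.

End WitnessOrientation.

Lemma witness_orient_invariant X Y W x y z x' y' z' :
  convex X -> convex Y -> convex W -> ~ meet3 X Y W ->
  witness_pts X Y W (x, y, z) -> witness_pts X Y W (x', y', z') ->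
  orient x y z = orient x' y' z'.
Proof.
  intros cX cY cW N Wit Wit'.
  assert (N1 : ~ meet3 Y W X) by (intros M; exact (N (meet3_rot _ _ _ M))).
  assert (N2 : ~ meet3 W X Y) by (intros M; exact (N1 (meet3_rot _ _ _ M))).
  simpl in Wit, Wit'.
  rewrite (witness_orient_l X Y W cX cY cW N x x' y z), orient_rot,
    (witness_orient_l Y W X cY cW cX N1 y y' z x'), orient_rot,
    (witness_orient_l W X Y cW cX cY N2 z z' x' y'), orient_rot;
    simpl; tauto.
Qed.

Lemma o3_meet3 X Y W : meet3 X Y W -> o3 X Y W = 0%Z.
Proof.
  intros M. unfold o3. now destruct (excluded_middle_informative _).
Qed.

Lemma o3_witness X Y W x y z :
  convex X -> convex Y -> convex W -> ~ meet3 X Y W ->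
  witness_pts X Y W (x, y, z) -> o3 X Y W = orient x y z.
Proof.
  intros cX cY cW N Wit. unfold o3.
  destruct (excluded_middle_informative _) as [M | _]; [contradiction|].
  pose proof (epsilon_spec (inhabits (point0, point0, point0)) (witness_pts X Y W)
    (ex_intro _ (x, y, z) Wit)) as Chosen.
  destruct (epsilon _ _) as [[x' y'] z'].
  exact (witness_orient_invariant X Y W x' y' z' x y z cX cY cW N Chosen Wit).
Qed.

Lemma meet3_of_o3_eq0 X Y W :
  convex X -> convex Y -> convex W ->
  intersect Y W -> intersect X W -> intersect X Y ->
  o3 X Y W = 0%Z -> meet3 X Y W.
Proof.
  intros cX cY cW [x Hx] [y Hy] [z Hz] O.
  apply NNPP. intros N.
  assert (Wit : witness_pts X Y W (x, y, z)) by (simpl; tauto).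
  rewrite (o3_witness X Y W x y z cX cY cW N Wit) in O.
  exact (orient_neq0 x y z (witness_det3_neq0 X Y W cX cY cW N x y z Wit) O).
Qed.

Lemma bary_swap a b c p q r : bary a b c p q r = bary b a c q p r.
Proof. apply injective_projections; simpl; ring. Qed.

Lemma bary_rot a b c p q r : bary a b c p q r = bary b c a q r p.
Proof. apply injective_projections; simpl; ring. Qed.

Lemma barycentric_coordinates p1 p2 p3 p4 :
  det3 p1 p2 p3 <> 0 -> exists a b c, a + b + c = 1 /\ p4 = bary a b c p1 p2 p3.
Proof.
  intros D.
  exists (det3 p4 p2 p3 / det3 p1 p2 p3), (det3 p1 p4 p3 / det3 p1 p2 p3),
    (det3 p1 p2 p4 / det3 p1 p2 p3).
  revert D; destruct p1, p2, p3, p4; unfold det3; simpl; intros D.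
  split; [|apply injective_projections; simpl]; field; exact D.
Qed.

Lemma bary_one_negative a b c p1 p2 p3 p4 :
  a < 0 -> 0 <= b -> 0 <= c -> a + b + c = 1 -> p4 = bary a b c p1 p2 p3 ->
  segments_cross p1 p4 p2 p3.
Proof.
  intros Ha Hb Hc Habc ->.
  exists (lerp p2 p3 (c / (b + c))). split.
  - exists (1 / (1 - a)). split; [apply div_in_unit_interval; lra|].
    apply injective_projections; simpl; replace a with (1 - b - c) by lra; field; lra.
  - exists (c / (b + c)). split; [apply div_in_unit_interval; lra | easy].
Qed.

Lemma bary_two_negative a b c p1 p2 p3 p4 :
  b < 0 -> c < 0 -> a + b + c = 1 -> p4 = bary a b c p1 p2 p3 ->
  in_triangle p2 p3 p4 p1.
Proof.
  intros Hb Hc Habc ->.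
  exists (- b / a), (- c / a), (1 / a). repeat split.
  1-3: apply div_in_unit_interval; lra.
  - field_simplify; [|lra]. replace (- b - c + 1) with a by lra. field. lra.
  - apply injective_projections; simpl; field; lra.
Qed.

Lemma radon4 p1 p2 p3 p4 :
  in_triangle p2 p3 p4 p1 \/ in_triangle p1 p3 p4 p2 \/
  in_triangle p1 p2 p4 p3 \/ in_triangle p1 p2 p3 p4 \/
  segments_cross p1 p4 p2 p3 \/ segments_cross p2 p4 p1 p3 \/
  segments_cross p3 p4 p1 p2.
Proof.
  destruct (Req_dec (det3 p1 p2 p3) 0) as [D | D].
  - destruct (collinear_between p1 p2 p3 D) as [S | [S | S]];
      apply (in_segment_in_triangle _ _ p4) in S; tauto.
  - destruct (barycentric_coordinates p1 p2 p3 p4 D) as [a [b [c [Habc E]]]].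
    destruct (Rlt_or_le a 0), (Rlt_or_le b 0), (Rlt_or_le c 0).
    + lra.
    + rewrite bary_rot, bary_rot in E.
      apply (bary_two_negative c a b p3 p1 p2 p4) in E; [tauto | lra ..].
    + rewrite bary_swap in E.
      apply (bary_two_negative b a c p2 p1 p3 p4) in E; [tauto | lra ..].
    + apply (bary_one_negative a b c p1 p2 p3 p4) in E; [tauto | lra ..].
    + apply (bary_two_negative a b c p1 p2 p3 p4) in E; [tauto | lra ..].
    + rewrite bary_swap in E.
      apply (bary_one_negative b a c p2 p1 p3 p4) in E; [tauto | lra ..].
    + rewrite bary_rot, bary_rot in E.
      apply (bary_one_negative c a b p3 p1 p2 p4) in E; [tauto | lra ..].
    + do 3 right; left. exists a, b, c. tauto.
Qed.

Lemma helly4 S1 S2 S3 S4 :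
  convex S1 -> convex S2 -> convex S3 -> convex S4 ->
  meet3 S2 S3 S4 -> meet3 S1 S3 S4 -> meet3 S1 S2 S4 -> meet3 S1 S2 S3 ->
  meet4 S1 S2 S3 S4.
Proof.
  intros c1 c2 c3 c4 [p1 H1] [p2 H2] [p3 H3] [p4 H4].
  destruct (radon4 p1 p2 p3 p4)
    as [T | [T | [T | [T | [[u [U1 U2]] | [[u [U1 U2]] | [u [U1 U2]]]]]]]].
  - exists p1. pose proof (convex_triangle S1 p2 p3 p4 p1 c1). tauto.
  - exists p2. pose proof (convex_triangle S2 p1 p3 p4 p2 c2). tauto.
  - exists p3. pose proof (convex_triangle S3 p1 p2 p4 p3 c3). tauto.
  - exists p4. pose proof (convex_triangle S4 p1 p2 p3 p4 c4). tauto.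
  - exists u. pose proof (convex_segment S2 p1 p4 u c2).
    pose proof (convex_segment S3 p1 p4 u c3). pose proof (convex_segment S1 p2 p3 u c1).
    pose proof (convex_segment S4 p2 p3 u c4). tauto.
  - exists u. pose proof (convex_segment S1 p2 p4 u c1).
    pose proof (convex_segment S3 p2 p4 u c3). pose proof (convex_segment S2 p1 p3 u c2).
    pose proof (convex_segment S4 p1 p3 u c4). tauto.
  - exists u. pose proof (convex_segment S1 p3 p4 u c1).
    pose proof (convex_segment S2 p3 p4 u c2). pose proof (convex_segment S3 p1 p2 u c3).
    pose proof (convex_segment S4 p1 p2 u c4). tauto.
Qed.

Lemma pairwise_intersecting_incl L L' :
  incl L L' -> pairwise_intersecting L' -> pairwise_intersecting L.
Proof. intros Sub PW X Y HX HY. apply PW; apply Sub; assumption. Qed.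

Lemma meet4_of_o4_zero S1 S2 S3 S4 :
  convex S1 -> convex S2 -> convex S3 -> convex S4 ->
  pairwise_intersecting (S1 :: S2 :: S3 :: S4 :: nil) ->
  o4_zero S1 S2 S3 S4 -> meet4 S1 S2 S3 S4.
Proof.
  intros c1 c2 c3 c4 PW [O123 [O124 [O134 O234]]].
  apply helly4; try assumption; apply meet3_of_o3_eq0; try assumption;
    apply PW; simpl; tauto.
Qed.

Theorem lemma4 (A1 A2 B1 B2 C1 C2 : pset) :
  compact_convex A1 -> compact_convex A2 -> compact_convex B1 ->
  compact_convex B2 -> compact_convex C1 -> compact_convex C2 ->
  pairwise_intersecting (A1 :: A2 :: B1 :: B2 :: C1 :: C2 :: nil) ->
  o4_zero A1 A2 B1 B2 -> o4_zero A1 A2 C1 C2 -> o4_zero B1 B2 C1 C2 ->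
  o3 A1 B1 C1 <> 0%Z -> o3 A2 B2 C2 <> 0%Z ->
  o3 A1 B1 C1 = o3 A2 B2 C2.
Proof.
  intros [_ a1] [_ a2] [_ b1] [_ b2] [_ c1] [_ c2] PW OAB OAC OBC N1 N2.
  assert (PW4 : forall S1 S2 S3 S4,
             incl (S1 :: S2 :: S3 :: S4 :: nil) (A1 :: A2 :: B1 :: B2 :: C1 :: C2 :: nil) ->
             pairwise_intersecting (S1 :: S2 :: S3 :: S4 :: nil))
    by (intros * Sub; exact (pairwise_intersecting_incl _ _ Sub PW)).
  destruct (meet4_of_o4_zero A1 A2 B1 B2 a1 a2 b1 b2
              (PW4 A1 A2 B1 B2 ltac:(intros S; simpl; tauto)) OAB) as [z Z].
  destruct (meet4_of_o4_zero A1 A2 C1 C2 a1 a2 c1 c2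
              (PW4 A1 A2 C1 C2 ltac:(intros S; simpl; tauto)) OAC) as [y Y].
  destruct (meet4_of_o4_zero B1 B2 C1 C2 b1 b2 c1 c2
              (PW4 B1 B2 C1 C2 ltac:(intros S; simpl; tauto)) OBC) as [x X].
  assert (D1 : ~ meet3 A1 B1 C1) by (intros M; exact (N1 (o3_meet3 _ _ _ M))).
  assert (D2 : ~ meet3 A2 B2 C2) by (intros M; exact (N2 (o3_meet3 _ _ _ M))).
  rewrite (o3_witness A1 B1 C1 x y z), (o3_witness A2 B2 C2 x y z);
    simpl; tauto.
Qed.
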